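(* Let $\gamma>0$. Let $(\mathbf{x},\mathbf{u})$ have joint density $p(\mathbf{x},\mathbf{u})=(1-\epsilon(\mathbf{u}))p^{\star}(\mathbf{x},\mathbf{u})+\epsilon(\mathbf{u})\delta(\mathbf{x},\mathbf{u})$ with marginals $p(\mathbf{x})$, $p(\mathbf{u})$, and let a binary label $y\in\{0,1\}$ satisfy $p(y=0)=p(y=1)=\tfrac12$, $p(\mathbf{x},\mathbf{u}|y=1)=p(\mathbf{x},\mathbf{u})$ and $p(\mathbf{x},\mathbf{u}|y=0)=p(\mathbf{x})p(\mathbf{u})$. For a positive function $r(\mathbf{x},\mathbf{u})$ define the $\gamma$-cross entropy $$d_\gamma(p(y|\mathbf{x},\mathbf{u}),r(\mathbf{x},\mathbf{u});p(\mathbf{x},\mathbf{u})):=-\frac{1}{\gamma}\log\iint\sum_{y=0}^{1}\left\{\frac{r(\mathbf{x},\mathbf{u})^{y(\gamma+1)}}{1+r(\mathbf{x},\mathbf{u})^{\gamma+1}}\right\}^{\frac{\gamma}{\gamma+1}}p(y,\mathbf{x},\mathbf{u})\,d\mathbf{x}\,d\mathbf{u},$$ and let $$\nu:=\iint\left\{\frac{r(\mathbf{x},\mathbf{u})^{\gamma+1}}{1+r(\mathbf{x},\mathbf{u})^{\gamma+1}}\right\}^{\frac{\gamma}{\gamma+1}}\epsilon(\mathbf{u})\delta(\mathbf{x},\mathbf{u})\,d\mathbf{x}\,d\mathbf{u}.$$ Assume $\nu$ is sufficiently small. Then $$d_\gamma(p(y|\mathbf{x},\mathbf{u}),r(\mathbf{x},\mathbf{u});p(\mathbf{x},\mathbf{u}))=J[r]+O(\nu),$$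 where $$J[r]:=-\frac{1}{\gamma}\log\left[\frac12\iint\left\{\frac{1}{1+r(\mathbf{x},\mathbf{u})^{\gamma+1}}\right\}^{\frac{\gamma}{\gamma+1}}p(\mathbf{x})p(\mathbf{u})\,d\mathbf{x}\,d\mathbf{u}+\frac12\iint\left\{\frac{r(\mathbf{x},\mathbf{u})^{\gamma+1}}{1+r(\mathbf{x},\mathbf{u})^{\gamma+1}}\right\}^{\frac{\gamma}{\gamma+1}}(1-\epsilon(\mathbf{u}))p^{\star}(\mathbf{x},\mathbf{u})\,d\mathbf{x}\,d\mathbf{u}\right].$$ Furthermore, if $p(\mathbf{x})$, $p(\mathbf{u})$ and $r(\mathbf{x},\mathbf{u})$ are positive for all $\mathbf{x},\mathbf{u}$, then $J[r]$ is minimized at $$r^{\star}(\mathbf{x},\mathbf{u})=\frac{(1-\epsilon(\mathbf{u}))p^{\star}(\mathbf{x}|\mathbf{u})}{p(\mathbf{x})}.$$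
   Context: Here $p^{\star}(\mathbf{x},\mathbf{u})=p^{\star}(\mathbf{x}|\mathbf{u})p(\mathbf{u})$ is the target (noncontaminated) joint density, $\delta(\mathbf{x},\mathbf{u})=\delta(\mathbf{x}|\mathbf{u})p(\mathbf{u})$ is an outlier density, and $\epsilon(\mathbf{u})\in[0,1)$ is a contamination ratio that may depend on $\mathbf{u}$ (it is not assumed small). $p(\mathbf{x})=\int p(\mathbf{x}|\mathbf{u})p(\mathbf{u})d\mathbf{u}$ is the contaminated marginal. $p(y,\mathbf{x},\mathbf{u})=p(\mathbf{x},\mathbf{u}|y)p(y)$. $O(\nu)$ denotes a term bounded by a constant times $\nu$ as $\nu\to0$. *)

From HB Require Import structures.
From mathcomp Require Import all_boot all_order all_algebra.
From mathcomp Require Import all_classical all_reals all_analysis.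
Set Implicit Arguments. Unset Strict Implicit. Unset Printing Implicit Defensive.
Import Order.TTheory GRing.Theory Num.Theory.
Import numFieldNormedType.Exports.
Local Open Scope classical_set_scope.
Local Open Scope ring_scope.

Section Defs.
Context (R : realType) (dx du : measure_display)
  (X : measurableType dx) (U : measurableType du)
  (mux : {sigma_finite_measure set X -> \bar R})
  (muu : {sigma_finite_measure set U -> \bar R}).

Definition joint_of_cond (pc : X -> U -> R) (pu : U -> R) (x : X) (u : U) : R :=
  pc x u * pu u.

Definition pcontam (eps : U -> R) (pstar delta : X -> U -> R) (x : X) (u : U) : R :=
  (1 - eps u) * pstar x u + eps u * delta x u.

Definition marg_x (pj : X -> U -> R) (x : X) : R :=
  \int[muu]_(u in setT) pj x u.

Definition p_y_xu (pj : X -> U -> R) (pu : U -> R) (y : nat) (x : X) (u : U) : R :=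
  (if y == 1%N then pj x u else marg_x pj x * pu u) * (1 / 2).

Definition wgt (g : R) (r : R) (y : nat) : R :=
  ((r `^ (y%:R * (g + 1))) / (1 + r `^ (g + 1))) `^ (g / (g + 1)).

Definition dgamma (g : R) (r : X -> U -> R) (pyxu : nat -> X -> U -> R) : R :=
  - (1 / g) * ln (\int[(mux \x muu)%E]_(z in setT)
       (\sum_(y < 2) wgt g (r z.1 z.2) y * pyxu y z.1 z.2)).

Definition nu (g : R) (r : X -> U -> R) (eps : U -> R) (delta : X -> U -> R) : R :=
  \int[(mux \x muu)%E]_(z in setT) (wgt g (r z.1 z.2) 1 * (eps z.2 * delta z.1 z.2)).

Definition Jr (g : R) (r : X -> U -> R) (px : X -> R) (pu : U -> R)
    (eps : U -> R) (pstar : X -> U -> R) : R :=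
  - (1 / g) * ln (
      (1 / 2) * (\int[(mux \x muu)%E]_(z in setT)
                   (wgt g (r z.1 z.2) 0 * (px z.1 * pu z.2)))
    + (1 / 2) * (\int[(mux \x muu)%E]_(z in setT)
                   (wgt g (r z.1 z.2) 1 * ((1 - eps z.2) * pstar z.1 z.2)))).

End Defs.

Definition cond_density (R : realType) (dx du : measure_display)
  (X : measurableType dx) (U : measurableType du)
  (mux : {measure set X -> \bar R}) (pc : X -> U -> R) : Prop :=
  measurable_fun setT (fun z : X * U => pc z.1 z.2) /\
  (forall x u, 0 <= pc x u) /\
  (forall u, mux.-integrable setT (fun x => (pc x u)%:E) /\
             \int[mux]_(x in setT) pc x u = 1).

Definition density (R : realType) (du : measure_display) (U : measurableType du)
  (muu : {measure set U -> \bar R}) (p : U -> R) : Prop :=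
  measurable_fun setT p /\ (forall u, 0 <= p u) /\
  muu.-integrable setT (fun u => (p u)%:E) /\ \int[muu]_(u in setT) p u = 1.

From mathcomp Require Import all_boot all_order all_algebra.
From mathcomp Require Import all_classical all_reals all_analysis.
From mathcomp Require Import measurable_realfun ring.
Import Order.TTheory GRing.Theory Num.Theory.
Import numFieldNormedType.Exports.
Local Open Scope classical_set_scope.
Local Open Scope ring_scope.

(* Against the labelled density p(y,x,u) the integral inside d_gamma splits
   into the argument A of the logarithm in J[r] plus nu/2, so
   d_gamma - J[r] = -(1/gamma) ln (1 + nu/(2A)), and ln (1 + t) <= t bounds it
   by nu/(2 gamma A) = e^(gamma J[r]) nu/(2 gamma).
   For the minimiser, Hoelder's inequality with exponents (gamma+1)/gamma and
   gamma+1 bounds the integrand of A pointwise by (a^(gamma+1) + b^(gamma+1))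
   ^(1/(gamma+1)), where a = p(x)p(u) and b = (1-eps(u)) p*(x,u), with equality
   at r = b/a = r*; and -(1/gamma) ln is decreasing. *)

Section gamma_weights.
Context {R : realType}.
Implicit Types (g r x A B : R) (y : nat).

Lemma wgt0E g r : wgt g r 0 = (1 / (1 + r `^ (g + 1))) `^ (g / (g + 1)).
Proof. by rewrite /wgt mul0r powRr0. Qed.

Lemma wgt1E g r : wgt g r 1 = (r `^ (g + 1) / (1 + r `^ (g + 1))) `^ (g / (g + 1)).
Proof. by rewrite /wgt mul1r. Qed.

Lemma wgt_ge0 g r y : 0 <= wgt g r y.
Proof. exact: powR_ge0. Qed.

Lemma wgt1_gt0 g r : 0 < r -> 0 < wgt g r 1.
Proof.
move=> r0; rewrite wgt1E; apply/powR_gt0/divr_gt0; first exact: powR_gt0.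
by rewrite ltr_pwDl ?powR_ge0.
Qed.

Lemma wgt_le1 g r y : 0 <= g -> (y <= 1)%N -> wgt g r y <= 1.
Proof.
move=> g0 y1; have den : 0 < 1 + r `^ (g + 1) by rewrite ltr_pwDl ?powR_ge0.
have powR_le1 x : 0 <= x <= 1 -> x `^ (g / (g + 1)) <= 1.
  case/andP=> x0 x1; apply: (le_trans (ge0_ler_powR _ _ _ x1)) => //;
  by rewrite ?powR1 ?nnegrE ?divr_ge0 ?addr_ge0.
case: y y1 => [|[|//]] _; [rewrite wgt0E | rewrite wgt1E];
  apply: powR_le1; rewrite divr_ge0 ?powR_ge0 ?(ltW den) //=;
  by rewrite ler_pdivrMr // mul1r ?lerDl ?lerDr ?powR_ge0.
Qed.

Lemma powRVn x r : 0 <= x -> x^-1 `^ r = (x `^ r)^-1.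
Proof. by move=> x0; rewrite -powR_inv1 // -powRrM mulN1r powRN. Qed.

(* Hoelder with exponents (g+1)/g and g+1: the ((g+1)/g)-th powers of the two
   weights sum to 1. *)
Lemma wgt_hoelder g r A B : 0 < g -> 0 <= r -> 0 <= A -> 0 <= B ->
  wgt g r 0 * A + wgt g r 1 * B <= (A `^ (g + 1) + B `^ (g + 1)) `^ (g + 1)^-1.
Proof.
move=> g0 r0 A0 B0; have q0 : 0 < g + 1 by rewrite addr_gt0.
have p0 : 0 < (g + 1) / g by rewrite divr_gt0.
have pq : ((g + 1) / g)^-1 + (g + 1)^-1 = 1.
  by rewrite invf_div; field; rewrite gt_eqF.
have := hoelder2 (wgt_ge0 g r 0) (wgt_ge0 g r 1) A0 B0 p0 q0 pq.
have den : 0 < 1 + r `^ (g + 1) by rewrite ltr_pwDl ?powR_ge0.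
have gp : g / (g + 1) * ((g + 1) / g) = 1 by field; rewrite !gt_eqF.
rewrite wgt0E wgt1E -!powRrM gp !powRr1 ?divr_ge0 ?powR_ge0 ?(ltW den) //.
by rewrite -mulrDl divff ?gt_eqF // powR1 !mul1r.
Qed.

Lemma wgt_hoelder_eq g A B : 0 < g -> 0 < A -> 0 <= B ->
  wgt g (B / A) 0 * A + wgt g (B / A) 1 * B
  = (A `^ (g + 1) + B `^ (g + 1)) `^ (g + 1)^-1.
Proof.
move=> g0 A0 B0; have qn0 : g + 1 != 0 by rewrite gt_eqF ?addr_gt0.
have Aq : 0 < A `^ (g + 1) by exact: powR_gt0.
set S := A `^ (g + 1) + B `^ (g + 1).
have S0 : 0 < S by rewrite ltr_pwDl ?powR_ge0.
have BAq : (B / A) `^ (g + 1) = B `^ (g + 1) / A `^ (g + 1).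
  by rewrite powRM ?invr_ge0 ?(ltW A0) // powRVn ?(ltW A0).
have e0 : 1 / (1 + (B / A) `^ (g + 1)) = A `^ (g + 1) / S.
  by rewrite BAq /S; field; rewrite !gt_eqF.
have e1 : (B / A) `^ (g + 1) / (1 + (B / A) `^ (g + 1)) = B `^ (g + 1) / S.
  by rewrite BAq /S; field; rewrite !gt_eqF.
have powRS x : 0 <= x -> x `^ g * x = x `^ (g + 1).
  by move=> x0; rewrite powRD ?(negbTE qn0) // powRr1.
rewrite wgt0E wgt1E e0 e1 !powRM ?powR_ge0 ?invr_ge0 ?(ltW S0) //.
rewrite powRVn ?(ltW S0) // -!powRrM (_ : (g + 1) * (g / (g + 1)) = g); last by field.
rewrite mulrAC [_ * _^-1 * B]mulrAC !powRS ?(ltW A0) // -mulrDl -/S.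
rewrite -{1}(powRr1 (ltW S0)) -powRB ?(gt_eqF S0) ?implybT //.
by congr (_ `^ _); field.
Qed.

Lemma ln_addr_sub_le A x : 0 < A -> 0 <= x -> ln (A + x) - ln A <= x / A.
Proof.
move=> A0 x0; have -> : A + x = A * (1 + x / A) by field; rewrite gt_eqF.
rewrite lnM ?posrE ?ltr_pwDl ?divr_ge0 ?(ltW A0) // addrAC subrr add0r.
by apply: le_ln1Dx; rewrite (lt_le_trans _ (divr_ge0 x0 (ltW A0))) ?ltrN10.
Qed.

Lemma neg_scaled_ln_le g A B : 0 < g -> 0 < A -> A <= B ->
  - (1 / g) * ln B <= - (1 / g) * ln A.
Proof.
move=> g0 A0 AB; rewrite !mulNr lerN2 ler_pM2l ?divr_gt0 //.
by rewrite ler_ln ?posrE // (lt_le_trans A0).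
Qed.

(* The constant exp(g J) / (2 g) is 1 / (2 g A) when J = -(1/g) ln A. *)
Lemma neg_scaled_ln_perturb g A x : 0 < g -> 0 < A -> 0 <= x ->
  `| - (1 / g) * ln (A + 1 / 2 * x) - - (1 / g) * ln A |
    <= expR (g * (- (1 / g) * ln A)) / (2 * g) * x.
Proof.
move=> g0 A0 x0; have x20 : 0 <= 1 / 2 * x by rewrite mulr_ge0.
have -> : - (1 / g) * ln (A + 1 / 2 * x) - - (1 / g) * ln A
          = - (1 / g * (ln (A + 1 / 2 * x) - ln A)) by ring.
rewrite normrN normrM !ger0_norm ?divr_ge0 ?(ltW g0) //; last first.
  by rewrite subr_ge0 ler_ln ?posrE ?ltr_pwDl ?lerDl.
have -> : g * (- (1 / g) * ln A) = - ln A by field; rewrite gt_eqF.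
rewrite expRN lnK ?posrE //.
have -> : A^-1 / (2 * g) * x = 1 / g * (1 / 2 * x / A) by field; rewrite !gt_eqF.
by rewrite ler_wpM2l ?divr_ge0 ?(ltW g0) ?ln_addr_sub_le.
Qed.

End gamma_weights.

Section real_integrals.
Context {R : realType} {d : measure_display} {T : measurableType d}
  {mu : {measure set T -> \bar R}}.
Implicit Types f h k : T -> R.

Lemma measurable_funV_ge0 f : measurable_fun setT f -> (forall t, 0 <= f t) ->
  measurable_fun setT (fun t => (f t)^-1).
Proof.
move=> mf f0; rewrite (_ : (fun t => _) = (fun t => f t `^ (-1))).
  exact: measurableT_comp (measurable_powR _) mf.
by apply/funext => t; rewrite powR_inv1.
Qed.

Lemma measurable_wgt g (r : T -> R) y : measurable_fun setT r ->
  measurable_fun setT (fun t => wgt g (r t) y).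
Proof.
move=> mr; have mpowr p : measurable_fun setT (fun t => r t `^ p).
  exact: measurableT_comp (measurable_powR _) mr.
apply: measurableT_comp (measurable_powR _) _; apply: measurable_funM => //.
apply: measurable_funV_ge0 => [|t]; last by rewrite addr_ge0 ?powR_ge0.
exact: measurable_funD.
Qed.

Lemma integrable_RintegralE {D f} : measurable D ->
  mu.-integrable D (EFin \o f) ->
  (\int[mu]_(x in D) (f x)%:E = (Rintegral mu D f)%:E)%E.
Proof. by move=> mD fi; rewrite fineK // (integrable_fin_num mD fi). Qed.

Lemma integrable_EFinD {f h} :
  mu.-integrable setT (EFin \o f) -> mu.-integrable setT (EFin \o h) ->
  mu.-integrable setT (EFin \o (fun t => f t + h t)).
Proof. exact: integrableD. Qed.

Lemma integrable_EFin_le {f h} : measurable_fun setT f ->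
  (forall t, 0 <= f t <= h t) ->
  mu.-integrable setT (EFin \o h) -> mu.-integrable setT (EFin \o f).
Proof.
move=> mf fh; apply: le_integrable => //; first exact/measurable_EFinP.
move=> t _ /=; have /andP[f0 fht] := fh t.
by rewrite lee_fin !ger0_norm // (le_trans f0).
Qed.

(* If h vanishes only where k does, h = 0 a.e. would force k = 0 a.e. *)
Lemma Rintegral_gt0 {h k} : mu.-integrable setT (EFin \o h) ->
  (forall t, 0 <= h t) -> measurable_fun setT k ->
  (forall t, h t = 0 -> k t = 0) -> (\int[mu]_t (k t)%:E != 0)%E ->
  0 < Rintegral mu setT h.
Proof.
move=> hi h0 mk hk; apply: contraNT; rewrite -leNgt => hle0.
have h_int0 : (\int[mu]_t `|(EFin \o h) t| = 0)%E.
  rewrite (eq_integral (EFin \o h)) => [|t _]; last by rewrite /= ger0_norm.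
  rewrite integrable_RintegralE // (_ : Rintegral _ _ _ = 0) //.
  by apply/le_anti; rewrite hle0 Rintegral_ge0.
have /integrableP[mh _] := hi.
have [N [mN N0 hN]] := (ae_eq_integral_abs _ measurableT mh).1 h_int0.
have k_ae0 : ae_eq mu setT (EFin \o k) (cst 0%E).
  exists N; split => // t /= Nt; apply: hN => /= ht; apply: Nt => _.
  by rewrite /= hk //; have [] := ht I.
rewrite (ae_eq_integral _ _ measurableT _ (measurable_cst _) k_ae0).
  by rewrite integral0.
exact/measurable_EFinP.
Qed.

End real_integrals.

Section densities.
Context {R : realType} {dx du : measure_display}
  {X : measurableType dx} {U : measurableType du}
  {mux : {sigma_finite_measure set X -> \bar R}}
  {muu : {sigma_finite_measure set U -> \bar R}}.
Local Notation P := (mux \x muu)%E.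
Implicit Types (pc pj : X -> U -> R) (pu : U -> R).

Lemma measurable_joint_of_cond {pc pu} : cond_density mux pc -> density muu pu ->
  measurable_fun setT (fun z : X * U => joint_of_cond pc pu z.1 z.2).
Proof.
move=> [mpc _] [mpu _]; apply: measurable_funM => //.
exact: measurableT_comp mpu measurable_snd.
Qed.

Lemma joint_of_cond_ge0 {pc pu} : cond_density mux pc -> density muu pu ->
  forall x u, 0 <= joint_of_cond pc pu x u.
Proof. by move=> [_ [pc0 _]] [_ [pu0 _]] x u; rewrite mulr_ge0. Qed.

Lemma integral_joint_of_cond {pc pu} : cond_density mux pc -> density muu pu ->
  (\int[P]_z (joint_of_cond pc pu z.1 z.2)%:E = 1)%E.
Proof.
move=> dpc dpu; have mj := measurable_joint_of_cond dpc dpu.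
case: dpc => [_ [pc0 ipc]]; case: dpu => [_ [pu0 [ipu Ipu]]].
rewrite (fubini_tonelli2 _ ((measurable_EFinP _ _).2 mj)) => [|z]; last first.
  by rewrite lee_fin mulr_ge0.
rewrite /fubini_G -[1%E]/(1%:E) -Ipu -integrable_RintegralE //.
apply: eq_integral => u _ /=; have [iu Iu] := ipc u.
under eq_integral do rewrite EFinM.
rewrite ge0_integralZr ?lee_fin //.
- by rewrite integrable_RintegralE // Iu mul1e.
- by case/integrableP: iu.
- by move=> x _; rewrite lee_fin.
Qed.

Lemma integrable_joint_of_cond {pc pu} : cond_density mux pc -> density muu pu ->
  P.-integrable setT (EFin \o (fun z : X * U => joint_of_cond pc pu z.1 z.2)).
Proof.
move=> dpc dpu; apply/integrableP; split.
  by apply/measurable_EFinP; exact: measurable_joint_of_cond dpc dpu.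
under eq_integral do rewrite /= ger0_norm ?(joint_of_cond_ge0 dpc dpu) //.
by rewrite integral_joint_of_cond ?ltry.
Qed.

Section marginal.
Context {pj : X -> U -> R}.
Hypotheses (mpj : measurable_fun setT (fun z : X * U => pj z.1 z.2))
  (pj0 : forall x u, 0 <= pj x u).

Let F := fubini_F muu (EFin \o (fun z : X * U => pj z.1 z.2)).

Let F0 x : (0 <= F x)%E.
Proof. by apply: integral_ge0 => u _; rewrite lee_fin. Qed.

Let measurable_F : measurable_fun setT F.
Proof.
apply: measurable_fun_fubini_tonelli_F => [|z]; first exact/measurable_EFinP.
by rewrite lee_fin.
Qed.

Let margE : marg_x muu pj = fine \o F. Proof. by []. Qed.

Lemma marg_x_ge0 x : 0 <= marg_x muu pj x.
Proof. by rewrite margE fine_ge0. Qed.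

Lemma measurable_marg_x : measurable_fun setT (marg_x muu pj).
Proof.
by rewrite margE; exact: measurableT_comp (fine_measurable measurableT) measurable_F.
Qed.

(* The marginal truncates an infinite inner integral to 0, hence only <=. *)
Lemma integral_marg_x_le :
  (\int[mux]_x (marg_x muu pj x)%:E <= \int[P]_z (pj z.1 z.2)%:E)%E.
Proof.
rewrite (fubini_tonelli1 _ ((measurable_EFinP _ _).2 mpj)) => [|z]; last first.
  by rewrite lee_fin.
apply: ge0_le_integral => //.
- by move=> x _; rewrite lee_fin marg_x_ge0.
- by apply/measurable_EFinP; exact: measurable_marg_x.
- by move=> x _; rewrite margE /= -/F; have := F0 x; case: (F x) => //= *; rewrite leey.
Qed.

Lemma integrable_marg_x_density pu : density muu pu ->
  P.-integrable setT (EFin \o (fun z : X * U => pj z.1 z.2)) ->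
  P.-integrable setT (EFin \o (fun z : X * U => marg_x muu pj z.1 * pu z.2)).
Proof.
move=> [mpu [pu0 [ipu Ipu]]] ipj.
have mf : measurable_fun setT (fun z : X * U => marg_x muu pj z.1 * pu z.2).
  apply: measurable_funM; first exact: measurableT_comp measurable_marg_x measurable_fst.
  exact: measurableT_comp mpu measurable_snd.
have f0 z : 0 <= marg_x muu pj z.1 * pu z.2 by rewrite mulr_ge0 ?marg_x_ge0.
apply/integrableP; split; first exact/measurable_EFinP.
under eq_integral do rewrite /= ger0_norm //.
have ipj_fin : (\int[P]_z (pj z.1 z.2)%:E < +oo)%E.
  by rewrite integrable_RintegralE // ltry.
suff -> : (\int[P]_z (marg_x muu pj z.1 * pu z.2)%:E =
           \int[mux]_x (marg_x muu pj x)%:E)%E.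
  exact: le_lt_trans integral_marg_x_le ipj_fin.
rewrite (fubini_tonelli1 _ ((measurable_EFinP _ _).2 mf)) => [|z]; last first.
  by rewrite lee_fin.
apply: eq_integral => x _; rewrite /fubini_F /=; under eq_integral do rewrite EFinM.
rewrite ge0_integralZl ?lee_fin ?marg_x_ge0 //.
- by rewrite integrable_RintegralE // Ipu mule1.
- by case/integrableP: ipu.
- by move=> u _; rewrite lee_fin.
Qed.

End marginal.
End densities.

Section contamination.
Context {R : realType} (dx du : measure_display)
  (X : measurableType dx) (U : measurableType du)
  (mux : {sigma_finite_measure set X -> \bar R})
  (muu : {sigma_finite_measure set U -> \bar R}).
Variables (g : R) (pu eps : U -> R) (pstar_c delta_c : X -> U -> R).
Hypotheses (g0 : 0 < g) (dpu : density muu pu) (meps : measurable_fun setT eps)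
  (heps : forall u, 0 <= eps u < 1)
  (dps : cond_density mux pstar_c) (dde : cond_density mux delta_c).

Local Notation P := (mux \x muu)%E.
Local Notation pstar := (joint_of_cond pstar_c pu).
Local Notation delta := (joint_of_cond delta_c pu).
Local Notation pj := (pcontam eps pstar delta).
Local Notation px := (marg_x muu pj).
Local Notation wmarg r :=
  (fun z : X * U => wgt g (r z.1 z.2) 0 * (px z.1 * pu z.2)).
Local Notation wstar r :=
  (fun z : X * U => wgt g (r z.1 z.2) 1 * ((1 - eps z.2) * pstar z.1 z.2)).
Local Notation woutlier r :=
  (fun z : X * U => wgt g (r z.1 z.2) 1 * (eps z.2 * delta z.1 z.2)).

Let eps_ge0 u : 0 <= eps u. Proof. by case/andP: (heps u). Qed.
Let eps_le1 u : eps u <= 1. Proof. by case/andP: (heps u) => _ /ltW. Qed.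
Let subr_eps_gt0 u : 0 < 1 - eps u. Proof. by case/andP: (heps u); rewrite subr_gt0. Qed.
Let subr_eps_le1 u : 1 - eps u <= 1. Proof. by rewrite lerBlDr lerDl. Qed.

Let measurable_eps2 : measurable_fun setT (fun z : X * U => eps z.2).
Proof. exact: measurableT_comp meps measurable_snd. Qed.

Let wgt_bounds r y : (y <= 1)%N -> 0 <= wgt g r y <= 1.
Proof. by move=> y1; rewrite wgt_ge0 wgt_le1 ?(ltW g0). Qed.

Let pstar_ge0 x u : 0 <= pstar x u. Proof. exact: (joint_of_cond_ge0 dps dpu x u). Qed.
Let delta_ge0 x u : 0 <= delta x u. Proof. exact: (joint_of_cond_ge0 dde dpu x u). Qed.

Lemma pcontam_ge0 x u : 0 <= pj x u.
Proof. by rewrite /pcontam addr_ge0 // mulr_ge0 // ltW. Qed.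

Lemma pcontam_le x u : pj x u <= pstar x u + delta x u.
Proof. by rewrite /pcontam lerD // ler_piMl. Qed.

Lemma measurable_pcontam : measurable_fun setT (fun z : X * U => pj z.1 z.2).
Proof.
have mstar := measurable_joint_of_cond dps dpu.
have mdelta := measurable_joint_of_cond dde dpu.
apply: measurable_funD; apply: measurable_funM => //.
exact: measurable_funB.
Qed.

Lemma integrable_marg_x_pu :
  P.-integrable setT (EFin \o (fun z : X * U => px z.1 * pu z.2)).
Proof.
apply: integrable_marg_x_density => //; first exact: measurable_pcontam.
  by move=> x u; exact: pcontam_ge0.
apply: integrable_EFin_le measurable_pcontam _ _.
  by move=> z; rewrite pcontam_ge0 /=; exact: pcontam_le.
exact: integrable_EFinD (integrable_joint_of_cond dps dpu)
  (integrable_joint_of_cond dde dpu).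
Qed.

Let measurable_px : measurable_fun setT px.
Proof. exact: measurable_marg_x measurable_pcontam pcontam_ge0. Qed.

Let px_ge0 x : 0 <= px x.
Proof. exact: (marg_x_ge0 pcontam_ge0 x). Qed.

Let pu_ge0 u : 0 <= pu u. Proof. by case: dpu => _ []. Qed.

Let measurable_pu2 : measurable_fun setT (fun z : X * U => pu z.2).
Proof. by case: dpu => mpu _; exact: measurableT_comp mpu measurable_snd. Qed.

Section weighted.
Variable r : X -> U -> R.
Hypotheses (mr : measurable_fun setT (fun z : X * U => r z.1 z.2)).

Lemma integrable_wmarg : P.-integrable setT (EFin \o wmarg r).
Proof.
apply: integrable_EFin_le integrable_marg_x_pu.
  apply: measurable_funM; first exact: measurable_wgt.
  by apply: measurable_funM => //; exact: measurableT_comp measurable_px measurable_fst.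
move=> z; have /andP[w0 w1] := wgt_bounds (r z.1 z.2) 0 isT.
by rewrite mulr_ge0 ?mulr_ge0 //= ler_piMl ?mulr_ge0.
Qed.

Lemma integrable_wstar : P.-integrable setT (EFin \o wstar r).
Proof.
apply: integrable_EFin_le (integrable_joint_of_cond dps dpu).
  apply: measurable_funM; first exact: measurable_wgt.
  apply: measurable_funM; first exact: measurable_funB.
  exact: measurable_joint_of_cond dps dpu.
move=> z; have /andP[w0 w1] := wgt_bounds (r z.1 z.2) 1 isT.
have ps0 : 0 <= (1 - eps z.2) * pstar z.1 z.2 by rewrite mulr_ge0 ?(ltW (subr_eps_gt0 _)).
by rewrite mulr_ge0 //= (le_trans (ler_piMl _ w1)) // ler_piMl.
Qed.

Lemma integrable_woutlier : P.-integrable setT (EFin \o woutlier r).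
Proof.
apply: integrable_EFin_le (integrable_joint_of_cond dde dpu).
  apply: measurable_funM; first exact: measurable_wgt.
  by apply: measurable_funM => //; exact: measurable_joint_of_cond dde dpu.
move=> z; have /andP[w0 w1] := wgt_bounds (r z.1 z.2) 1 isT.
have de0 : 0 <= eps z.2 * delta z.1 z.2 by rewrite mulr_ge0.
by rewrite mulr_ge0 //= (le_trans (ler_piMl _ w1)) // ler_piMl.
Qed.

Lemma dgammaE : dgamma mux muu g r (p_y_xu muu pj pu) =
  - (1 / g) * ln ((1 / 2 * Rintegral P setT (wmarg r)
                   + 1 / 2 * Rintegral P setT (wstar r))
                  + 1 / 2 * Rintegral P setT (woutlier r)).
Proof.
rewrite /dgamma; congr (_ * ln _).
transitivity (Rintegral P setT
  (fun z => 1 / 2 * (wmarg r z + (wstar r z + woutlier r z)))).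
  apply: eq_Rintegral => z _.
  rewrite !big_ord_recl big_ord0 /p_y_xu /= (_ : bump 0 0 = 1%N) //.
  rewrite [pcontam _ _ _ z.1 z.2]/pcontam.
  (* generalising the atoms keeps [ring] from unfolding them *)
  move: (wgt g _ 0) (wgt g _ 1) (px z.1) (pu z.2) (eps z.2)
    (pstar z.1 z.2) (delta z.1 z.2).
  by move=> w0 w1 m p e a b; ring.
have iwm := integrable_wmarg; have iws := integrable_wstar.
have iwo := integrable_woutlier; have iso := integrable_EFinD iws iwo.
have isum := integrable_EFinD iwm iso.
by rewrite RintegralZl ?RintegralD //; ring.
Qed.

Hypothesis r_gt0 : forall x u, 0 < r x u.

Lemma Rintegral_wstar_gt0 : 0 < Rintegral P setT (wstar r).
Proof.
apply: Rintegral_gt0 integrable_wstar _ (measurable_joint_of_cond dps dpu) _ _.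
- by move=> z; rewrite mulr_ge0 ?wgt_ge0 // mulr_ge0 // ltW.
- move=> z /eqP; rewrite mulf_eq0 (gt_eqF (wgt1_gt0 _ _ (r_gt0 _ _))) /=.
  by rewrite mulf_eq0 (gt_eqF (subr_eps_gt0 _)) => /eqP.
- by rewrite [X in X != _](integral_joint_of_cond dps dpu) onee_neq0.
Qed.

Lemma Jr_arg_gt0 : 0 < 1 / 2 * Rintegral P setT (wmarg r)
                      + 1 / 2 * Rintegral P setT (wstar r).
Proof.
rewrite ltr_wpDl ?mulr_gt0 ?Rintegral_wstar_gt0 //.
by rewrite mulr_ge0 // Rintegral_ge0 // => z _; rewrite !mulr_ge0 ?wgt_ge0.
Qed.

Lemma dgamma_Jr_bound : let J := Jr mux muu g r px pu eps pstar in
  `| dgamma mux muu g r (p_y_xu muu pj pu) - J |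
    <= expR (g * J) / (2 * g) * nu mux muu g r eps delta.
Proof.
rewrite dgammaE; apply: neg_scaled_ln_perturb g0 Jr_arg_gt0 _.
by apply: Rintegral_ge0 => z _; rewrite mulr_ge0 ?wgt_ge0 // mulr_ge0.
Qed.

End weighted.

Section optimality.
Hypotheses (px_gt0 : forall x, 0 < px x) (pu_gt0 : forall u, 0 < pu u).
Local Notation rstar := (fun x u => (1 - eps u) * pstar_c x u / px x).

Let rstarE x u :
  (1 - eps u) * pstar_c x u / px x = (1 - eps u) * pstar x u / (px x * pu u).
Proof. by rewrite /joint_of_cond; field; rewrite !gt_eqF. Qed.

Let measurable_rstar : measurable_fun setT (fun z : X * U => rstar z.1 z.2).
Proof.
case: dps => mps _; apply: measurable_funM.
  by apply: measurable_funM => //; exact: measurable_funB.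
apply: measurable_funV_ge0 => [|z]; last exact: px_ge0.
exact: measurableT_comp measurable_px measurable_fst.
Qed.

Lemma Jr_rstar_le (r : X -> U -> R) :
  measurable_fun setT (fun z : X * U => r z.1 z.2) -> (forall x u, 0 < r x u) ->
  Jr mux muu g rstar px pu eps pstar <= Jr mux muu g r px pu eps pstar.
Proof.
move=> mr r_gt0; apply: (neg_scaled_ln_le _ _ _ g0 (Jr_arg_gt0 _ mr r_gt0)).
have imr := integrable_wmarg _ mr; have isr := integrable_wstar _ mr.
have ims := integrable_wmarg _ measurable_rstar.
have iss := integrable_wstar _ measurable_rstar.
rewrite -[leLHS]mulrDr -[leRHS]mulrDr ler_pM2l; last by rewrite divr_gt0.
(* not [//]: [done] diverges trying to unify the two sides of the goal *)
rewrite -[leLHS]RintegralD -?[leRHS]RintegralD; last first.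
- exact: isr.
- exact: imr.
- exact: measurableT.
- exact: iss.
- exact: ims.
- exact: measurableT.
apply: le_Rintegral; [exact: measurableT | exact: integrable_EFinD imr isr
  | exact: integrable_EFinD ims iss | move=> z _].
have A_gt0 : 0 < px z.1 * pu z.2 by rewrite mulr_gt0.
have B_ge0 : 0 <= (1 - eps z.2) * pstar z.1 z.2.
  by rewrite mulr_ge0 ?(ltW (subr_eps_gt0 _)).
rewrite rstarE [leRHS](wgt_hoelder_eq _ _ _ g0 A_gt0 B_ge0).
exact: wgt_hoelder (ltW (r_gt0 _ _)) (ltW A_gt0) B_ge0.
Qed.

End optimality.

End contamination.

Theorem theorem2 (R : realType) (g : R) (hg : 0 < g)
  (dx du : measure_display) (X : measurableType dx) (U : measurableType du)
  (mux : {sigma_finite_measure set X -> \bar R})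
  (muu : {sigma_finite_measure set U -> \bar R}) :
  (* d_gamma = J[r] + O(nu) as nu -> 0; the implied constant may depend
     on (gamma, the spaces and) the value J[r] *)
  (exists (C : R -> R) (nu0 : R), 0 < nu0 /\
    forall (pu : U -> R) (eps : U -> R) (pstar_c delta_c : X -> U -> R)
           (r : X -> U -> R),
      density muu pu ->
      measurable_fun setT eps -> (forall u, 0 <= eps u < 1) ->
      cond_density mux pstar_c -> cond_density mux delta_c ->
      measurable_fun setT (fun z : X * U => r z.1 z.2) ->
      (forall x u, 0 < r x u) ->
      let pstar := joint_of_cond pstar_c pu in
      let delta := joint_of_cond delta_c pu in
      let pj := pcontam eps pstar delta in
      let px := marg_x muu pj in
      let J := Jr mux muu g r px pu eps pstar in
      nu mux muu g r eps delta <= nu0 ->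
      `| dgamma mux muu g r (p_y_xu muu pj pu) - J |
        <= C J * nu mux muu g r eps delta)
  /\
  (* J[r] is minimized at r* = (1 - eps(u)) p*(x|u) / p(x) *)
  (forall (pu : U -> R) (eps : U -> R) (pstar_c delta_c : X -> U -> R),
      density muu pu ->
      measurable_fun setT eps -> (forall u, 0 <= eps u < 1) ->
      cond_density mux pstar_c -> cond_density mux delta_c ->
      let pstar := joint_of_cond pstar_c pu in
      let delta := joint_of_cond delta_c pu in
      let pj := pcontam eps pstar delta in
      let px := marg_x muu pj in
      (forall x, 0 < px x) -> (forall u, 0 < pu u) ->
      let rstar := fun x u => (1 - eps u) * pstar_c x u / px x in
      forall r : X -> U -> R,
        measurable_fun setT (fun z : X * U => r z.1 z.2) ->
        (forall x u, 0 < r x u) ->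
        Jr mux muu g rstar px pu eps pstar <= Jr mux muu g r px pu eps pstar).
Proof.
split.
- exists (fun J => expR (g * J) / (2 * g)), 1; split => //.
  move=> pu eps pstar_c delta_c r dpu meps heps dps dde mr r_gt0 ? ? ? ? ? _.
  exact: dgamma_Jr_bound.
- move=> pu eps pstar_c delta_c dpu meps heps dps dde ? ? ? ? px_gt0 pu_gt0 ? r mr r_gt0.
  exact: Jr_rstar_le.
Qed.
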